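(* Let $T,T'$ be one-to-one reduced linear trellises of the same length and let $f:T\to T'$ be an isomorphism of trellises. Then every $f_i:V_i(T)\to V_i(T')$ is linear, i.e. $f$ is a linear isomorphism. In particular, on a one-to-one reduced trellis there is exactly one vector space structure on each vertex set making it linear, up to the given labels (two such structures are related by the identity being a linear isomorphism).
   Context: Let $\mathbb{F}$ be a finite field and $n\ge1$; indices are taken in $\mathbb{Z}_n$. A trellis $T$ of length $n$ over $\mathbb{F}$ consists of pairwise disjoint finite vertex sets $V_i(T)$, $i\in\mathbb{Z}_n$, and edge sets $E_i(T)\subseteq V_i(T)\times\mathbb{F}\times V_{i+1}(T)$; $(v,\alpha,w)\in E_i(T)$ is an edge from $v$ to $w$ with label $\alpha$. Trellises are trim. $T$ is linear if each $V_i(T)$ is an $\mathbb{F}$-vector space and each $E_i(T)$ is a subspace. A cycle is a closed path of length $n$ starting in $V_0(T)$, identified with $(\mathbf{v},\boldsymbol{\alpha})\in\prod_iV_i(T)\times\mathbb{F}^n$; $\mathbb{S}(T)$ is the set of cycles, $L(\mathbf{v},\boldsymbol{\alpha})=\boldsymbol{\alpha}$, $C(T)=L(\mathbb{S}(T))$. $T$ is reduced if every edge lies on a cycle and one-to-one if $L:\mathbb{S}(T)\to C(T)$ is injective. An isomorphism $f:T\to T'$ is a family of bijections $f_i:V_i(T)\to V_i(T')$ with $(v,\alpha,w)\in E_i(T)\iff(f_i(v),\alpha,f_{i+1}(w))\in E_i(T')$. *)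

From HB Require Import structures.
From mathcomp Require Import all_boot all_order all_algebra.
Set Implicit Arguments. Unset Strict Implicit. Unset Printing Implicit Defensive.
Import GRing.Theory.
Local Open Scope ring_scope.

(* Indices i in Z_n are represented by 'I_n; i+1 is the cyclic successor ordS i. *)

Record linTrellis (F : finFieldType) (n : nat) := LinTrellis {
  V : 'I_n -> finLmodType F;
  E : forall i : 'I_n, V i -> F -> V (ordS i) -> Prop;
  E_zero : forall i : 'I_n, @E i (0 : V i) 0 (0 : V (ordS i));
  E_lin : forall (i : 'I_n) (a : F) v al w v' al' w',
      @E i v al w -> @E i v' al' w' -> @E i (a *: v + v') (a * al + al') (a *: w + w')
}.

Section TrellisNotions.
Variables (F : finFieldType) (n : nat) (T : linTrellis F n).

Definition trim : Prop :=
  forall i : 'I_n,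
    (forall x : V T i, exists al (w : V T (ordS i)), E x al w) /\
    (forall w : V T (ordS i), exists (x : V T i) al, E x al w).
(* since ordS is a bijection of Z_n, the second clause says every vertex
   of every V_j has an incoming edge *)

Definition is_cycle (v : forall i : 'I_n, V T i) (al : 'I_n -> F) : Prop :=
  forall i : 'I_n, E (v i) (al i) (v (ordS i)).

Definition reduced : Prop :=
  forall (i : 'I_n) (x : V T i) (a : F) (y : V T (ordS i)), E x a y ->
    exists v al, is_cycle v al /\ v i = x /\ al i = a /\ v (ordS i) = y.

(* one-to-one: the label map L : S(T) -> C(T) is injective *)
Definition one_to_one : Prop :=
  forall v v' al al', is_cycle v al -> is_cycle v' al' ->
    (forall i, al i = al' i) -> forall i, v i = v' i.

End TrellisNotions.

(* an isomorphism of trellises (as plain trellises: no linearity required) *)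
Definition trellis_iso (F : finFieldType) (n : nat) (T T' : linTrellis F n)
    (f : forall i : 'I_n, V T i -> V T' i) : Prop :=
  (forall i, bijective (f i)) /\
  (forall (i : 'I_n) (x : V T i) (a : F) (y : V T (ordS i)),
      E x a y <-> E (f i x) a (f (ordS i) y)).

From HB Require Import structures.
From mathcomp Require Import all_boot all_order all_algebra.
Set Implicit Arguments. Unset Strict Implicit. Unset Printing Implicit Defensive.
Local Open Scope ring_scope.

(* Every vertex lies on a cycle, and an isomorphism carries cycles to cycles with
   the same labels. Given vertices x, y of V_i on cycles c, c', the image of the
   cycle a c + c' and the combination a f(c) + f(c') are two cycles of T' with the
   same labels a al + al'; since T' is one-to-one they coincide, and at index i
   this reads f_i (a x + y) = a f_i x + f_i y. *)

Section Cycles.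
Variables (F : finFieldType) (n : nat).

Lemma is_cycle_comb (T : linTrellis F n) (a : F)
    (v v' : forall j, V T j) (al al' : 'I_n -> F) :
  is_cycle v al -> is_cycle v' al' ->
  is_cycle (fun j => a *: v j + v' j) (fun j => a * al j + al' j).
Proof. by move=> cv cv' j; apply: E_lin. Qed.

Lemma trellis_iso_cycle (T T' : linTrellis F n) (f : forall i, V T i -> V T' i)
    (v : forall j, V T j) (al : 'I_n -> F) :
  trellis_iso f -> is_cycle v al -> is_cycle (fun j => f j (v j)) al.
Proof. by move=> [_ hE] cv j; apply/hE. Qed.

Lemma exists_cycle_through (T : linTrellis F n) (i : 'I_n) (x : V T i) :
  trim T -> reduced T -> exists v al, is_cycle v al /\ v i = x.
Proof.
move=> trimT redT; have [a [y exy]] := (trimT i).1 x.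
have [v [al [cv [vi _]]]] := redT i x a y exy.
by exists v, al.
Qed.

End Cycles.

Theorem mainTheorem7 (F : finFieldType) (n : nat) (hn : (0 < n)%N)
    (T T' : linTrellis F n)
    (trimT : trim T) (trimT' : trim T')
    (redT : reduced T) (redT' : reduced T')
    (ooT : one_to_one T) (ooT' : one_to_one T')
    (f : forall i : 'I_n, V T i -> V T' i)
    (hf : trellis_iso f) :
  forall i : 'I_n, linear (f i).
Proof.
move=> i a x y /=.
have [v [al [cv <-]]] := exists_cycle_through x trimT redT.
have [v' [al' [cv' <-]]] := exists_cycle_through y trimT redT.
have c_image := trellis_iso_cycle hf (is_cycle_comb a cv cv').
have c_comb := is_cycle_comb a (trellis_iso_cycle hf cv) (trellis_iso_cycle hf cv').
exact: ooT' c_image c_comb (fun _ => erefl) i.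
Qed.
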